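(* In a search game (as defined in the context), $U_{\mathrm{opt}}=\max_{f\in F_C}\sum_{\omega\in\Omega}f(\omega)\mu(\omega)v_{\mathfrak{s}}(\omega)=\max_{f\in F_F}\sum_{\omega\in\Omega}f(\omega)\mu(\omega)v_{\mathfrak{s}}(\omega)$, where $F_C$ is the set of compatible mixed outcomes and $F_F$ is the set of mixed outcomes generated by fractional allocations.
   Context: A search game has a finite set of players $N=\{1,\ldots,n\}$, a finite set $\Omega$ of locations, for each player $i$ a partition $\Pi_i$ of $\Omega$ (with $\pi_i(\omega)$ the cell containing $\omega$), a capacity $K_i\in\mathbb{N}$, a prior $\mu\in\Delta(\Omega)$, and social values $v_{\mathfrak{s}}(\omega)\ge0$ (other ingredients are irrelevant here). A pure strategy $s_i$ assigns to each cell $\pi_i\in\Pi_i$ a subset $s_i(\pi_i)\subseteq\pi_i$ with at most $K_i$ elements; $S$ is the set of pure profiles, and $m_s(\omega)=\sum_{i\in N}\mathbf{1}_{\omega\in s_i(\pi_i(\omega))}$. The social payoff is $U(s)=\sum_{\omega}\mu(\omega)v_{\mathfrak{s}}(\omega)\mathbf{1}_{m_s(\omega)\ge1}$ and $U_{\mathrm{opt}}=\max_{s\in S}U(s)$. A mixed outcome is a function $f:\Omega\to[0,1]$; it is compatible if for every $W\subseteq\Omega$: $\sum_{\omega\in W}f(\omega)\le\sum_{i\in N}K_i\cdot|\{\pi_i\in\Pi_i:\pi_i\cap W\ne\emptyset\}|$. A fractional allocation $\alpha=(\alpha_1,\ldots,\alpha_n)$ specifies $\alpha_i(\pi_i,\omega)\ge0$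 for every player $i$, cell $\pi_i\in\Pi_i$ and $\omega\in\pi_i$, with $\sum_{\omega\in\pi_i}\alpha_i(\pi_i,\omega)\le K_i$ for every cell; it generates $f_\alpha(\omega)=\min\big(1,\sum_{i\in N}\alpha_i(\pi_i(\omega),\omega)\big)$. *)

From HB Require Import structures.
From mathcomp Require Import all_boot all_order all_algebra.
From mathcomp Require Import reals.
Set Implicit Arguments. Unset Strict Implicit. Unset Printing Implicit Defensive.
Import Order.TTheory GRing.Theory Num.Theory.
Local Open Scope ring_scope.

Section SearchGame.
Variables (R : realType) (Omega : finType) (n : nat).
Variable P : 'I_n -> {set {set Omega}}.
Variable K : 'I_n -> nat.
Variable mu : Omega -> R.
Variable vs : Omega -> R.

Definition cell (i : 'I_n) (w : Omega) : {set Omega} := pblock (P i) w.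

(* pure profiles: s i maps each cell to a subset of it of size <= K i
   (values on non-cells are irrelevant) *)
Definition profile := {ffun 'I_n -> {ffun {set Omega} -> {set Omega}}}.

Definition is_profile (s : profile) : bool :=
  [forall i, forall pi in P i, (s i pi \subset pi) && (#|s i pi| <= K i)%N].

Definition m_s (s : profile) (w : Omega) : nat :=
  (\sum_(i < n) (w \in s i (cell i w)))%N.

Definition U (s : profile) : R :=
  \sum_(w : Omega) mu w * vs w * ((1 <= m_s s w)%N)%:R.

Definition U_opt : R := \big[Num.max/0]_(s : profile | is_profile s) U s.

Definition mixed_outcome (f : Omega -> R) : Prop :=
  forall w, 0 <= f w <= 1.

Definition compatible (f : Omega -> R) : Prop :=
  mixed_outcome f /\
  forall W : {set Omega},
    \sum_(w in W) f w <=
    \sum_(i < n) (K i)%:R * #|[set pi in P i | pi :&: W != set0]|%:R.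

Definition frac_alloc (alpha : 'I_n -> {set Omega} -> Omega -> R) : Prop :=
  forall i, forall pi, pi \in P i ->
    (forall w, w \in pi -> 0 <= alpha i pi w) /\
    \sum_(w in pi) alpha i pi w <= (K i)%:R.

Definition f_alpha (alpha : 'I_n -> {set Omega} -> Omega -> R) (w : Omega) : R :=
  Num.min 1 (\sum_(i < n) alpha i (cell i w) w).

Definition value (f : Omega -> R) : R := \sum_(w : Omega) f w * mu w * vs w.

End SearchGame.

From mathcomp Require Import all_boot all_order all_algebra.
From mathcomp Require Import reals.
From mathcomp Require Import zify.
Set Implicit Arguments. Unset Strict Implicit. Unset Printing Implicit Defensive.
Import Order.TTheory GRing.Theory Num.Theory.

(* View cell pi of player i as a slot (i, pi) of capacity K i that can serve the
   locations of pi.  A pure profile is a capacitated matching of locations to slots,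
   so by Hall's theorem (with capacities) a set of locations is covered by some
   profile iff each of its subsets V satisfies |V| <= rk V, the total capacity of
   the slots meeting V.  Compatibility of f says exactly f(V) <= rk V for all V,
   and every f_alpha is compatible.  Since rk is submodular, a Hall set M with
   |M| < f(A) can be augmented inside A; hence, removing the cheapest location and
   inducting, for the weights mu * v >= 0 there is a Hall set M whose weight
   dominates the value of f, and a profile covering M shows value f <= U_opt.
   Conversely the coverage indicator of an optimal profile is compatible, is
   generated by the 0/1 allocation of that profile, and has value U_opt. *)

Section BMatching.
Variables (X Y : finType) (adj : X -> Y -> bool).
Implicit Types (b : Y -> nat) (A S V W M : {set X}).

Definition nbhd W : {set Y} := [set y | [exists x in W, adj x y]].

Definition rk b W : nat := \sum_(y in nbhd W) b y.

Definition matching b S (phi : X -> option Y) : Prop :=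
  (forall x, x \in S -> oapp (adj x) false (phi x)) /\
  (forall y, #|[set x in S | phi x == Some y]| <= b y).

Definition hall_set b S : bool :=
  [forall W : {set X}, (W \subset S) ==> (#|W| <= rk b W)].

Lemma hall_setP b S :
  reflect (forall W, W \subset S -> #|W| <= rk b W) (hall_set b S).
Proof.
apply: (iffP forallP) => [h W sWS | h W]; first by have /implyP := h W; apply.
by apply/implyP; apply: h.
Qed.

Lemma hall_setS b S S' : S \subset S' -> hall_set b S' -> hall_set b S.
Proof.
move=> sSS' /hall_setP h; apply/hall_setP => W sWS.
exact/h/(subset_trans sWS).
Qed.

Lemma hall_set0 b : hall_set b set0.
Proof. by apply/hall_setP => W; rewrite subset0 => /eqP ->; rewrite cards0. Qed.

Lemma mem_nbhd W x y : x \in W -> adj x y -> y \in nbhd W.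
Proof. by move=> xW axy; rewrite inE; apply/exists_inP; exists x. Qed.

Lemma nbhdS V W : V \subset W -> nbhd V \subset nbhd W.
Proof.
move=> sVW; apply/subsetP => y; rewrite !inE => /exists_inP [x xV axy].
by apply/exists_inP; exists x; rewrite ?(subsetP sVW).
Qed.

Lemma nbhdU V W : nbhd (V :|: W) = nbhd V :|: nbhd W.
Proof.
apply/setP => y; rewrite !inE; apply/exists_inP/orP.
  by case=> x /setUP [] xV axy; [left | right]; apply/exists_inP; exists x.
by case=> /exists_inP [x xVW axy]; exists x; rewrite // inE xVW ?orbT.
Qed.

Lemma rkS b V W : V \subset W -> rk b V <= rk b W.
Proof.
move/nbhdS => sNVW; rewrite /rk [leqRHS](big_setID (nbhd V)) (setIidPr sNVW).
exact: leq_addr.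
Qed.

Lemma rk0 b : rk b set0 = 0.
Proof.
rewrite /rk (_ : nbhd set0 = set0) ?big_set0 //.
by apply/setP => y; rewrite !inE; apply/exists_inP => -[x]; rewrite inE.
Qed.

Lemma rk_setU_setI b V W : rk b (V :|: W) + rk b (V :&: W) <= rk b V + rk b W.
Proof.
rewrite /rk nbhdU !(big_mkcond (fun y => y \in _)) -!big_split /=.
apply: leq_sum => y _; rewrite in_setU.
have := subsetP (nbhdS (subsetIr V W)) y; have := subsetP (nbhdS (subsetIl V W)) y.
case: (y \in nbhd (V :&: W)) => [/(_ isT) -> /(_ isT) -> // | _ _].
by case: (y \in nbhd V); case: (y \in nbhd W); rewrite /= ?addn0 ?leq_addr.
Qed.


Lemma card_fibers S phi W :
  (forall x, x \in S -> oapp (adj x) false (phi x)) -> W \subset S ->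
  #|W| = \sum_(y in nbhd W) #|[set x in W | phi x == Some y]|.
Proof.
move=> phiS sWS; rewrite -sum1_card.
have -> : \sum_(x in W) 1 = \sum_(x in W) \sum_(y in nbhd W) (phi x == Some y).
  apply: eq_bigr => x xW; have := phiS x (subsetP sWS x xW).
  case: (phi x) => //= y axy.
  rewrite (bigD1 y) ?(mem_nbhd xW) //= eqxx big1 // => z /andP [_ zy].
  by apply/eqP; rewrite eqb0; apply: contra zy => /eqP [->].
rewrite exchange_big; apply: eq_bigr => y _.
rewrite -sum1_card big_mkcond [RHS]big_mkcond; apply: eq_bigr => x _.
by rewrite inE; case: (x \in W); case: (phi x == Some y).
Qed.

Lemma matching_hall b S phi : matching b S phi -> hall_set b S.
Proof.
move=> [phiS capS]; apply/hall_setP => W sWS.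
rewrite (card_fibers phiS sWS) /rk; apply: leq_sum => y _.
apply: leq_trans (capS y); apply/subset_leq_card/subsetP => x.
by rewrite !inE => /andP [/(subsetP sWS) -> ->].
Qed.

Lemma matching0 b : matching b set0 (fun=> None).
Proof.
split=> [x | y]; rewrite ?inE //.
by rewrite (_ : [set x in set0 | _] = set0) ?cards0 //; apply/setP => x; rewrite !inE.
Qed.

Definition cap_off b (B : {set Y}) (y : Y) : nat := if y \in B then 0 else b y.

Lemma rk_setU_cap_off b V W :
  rk b (V :|: W) = rk b W + rk (cap_off b (nbhd W)) V.
Proof.
rewrite /rk nbhdU !(big_mkcond (fun y => y \in _)) -big_split /=.
apply: eq_bigr => y _; rewrite in_setU /cap_off.
by case: (y \in nbhd V); case: (y \in nbhd W); rewrite ?addn0.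
Qed.

Lemma hall_set_tight b S W0 :
  hall_set b S -> W0 \subset S -> rk b W0 <= #|W0| ->
  hall_set (cap_off b (nbhd W0)) (S :\: W0).
Proof.
move=> /hall_setP hS sW0S tight; apply/hall_setP => V sV.
have VW0 : V :&: W0 = set0.
  by apply/setP => x; rewrite !inE; case: (boolP (x \in V)) => // /(subsetP sV) /setDP [_ /negbTE].
have := hS (V :|: W0); rewrite subUset sW0S (subset_trans sV (subsetDl S W0)).
by rewrite cardsU VW0 cards0 subn0 rk_setU_cap_off /=; lia.
Qed.

Lemma matching_setU b W0 S phi1 phi2 :
  matching b W0 phi1 -> matching (cap_off b (nbhd W0)) S phi2 ->
  matching b (W0 :|: S) (fun x => if x \in W0 then phi1 x else phi2 x).
Proof.
move=> [adj1 cap1] [adj2 cap2]; split=> [x | y].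
  by case: ifP => [xW0 _ | xNW0]; [exact: adj1 | rewrite inE xNW0 => /adj2].
have sfib : [set x in W0 :|: S | (if x \in W0 then phi1 x else phi2 x) == Some y]
    \subset [set x in W0 | phi1 x == Some y] :|: [set x in S | phi2 x == Some y].
  apply/subsetP => x; rewrite !inE.
  by case: (x \in W0) => /= [-> // | /andP [-> ->]].
apply: leq_trans (subset_leq_card sfib) _; rewrite cardsU.
have := cap2 y; rewrite /cap_off; case: ifP => [_ | yW0].
  by rewrite leqn0 => /eqP ->; have := cap1 y; lia.
have -> : [set x in W0 | phi1 x == Some y] = set0.
  apply/setP => x; rewrite !inE; apply/negbTE/negP => /andP [xW0 /eqP phi1x].
  by have := adj1 x xW0; rewrite phi1x /= => /(mem_nbhd xW0); rewrite yW0.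
by rewrite cards0 add0n; lia.
Qed.

Definition cap_dec b (y : Y) (z : Y) : nat := b z - (z == y).

Lemma rk_le_cap_dec b y W : rk b W <= rk (cap_dec b y) W + 1.
Proof.
rewrite /rk /cap_dec.
apply: (@leq_trans (\sum_(z in nbhd W) ((b z - (z == y)) + (z == y)))).
  by apply: leq_sum => z _; case: (z == y) => /=; lia.
rewrite big_split leq_add2l /= (big_mkcond (fun z => z \in _)).
apply: (@leq_trans (\sum_z (z == y))); first by apply: leq_sum => z _; case: ifP.
by rewrite (bigD1 y) // eqxx big1 // => z /negbTE ->.
Qed.

Lemma hall_set_slack b S x0 y :
  (forall W, W \subset S -> W != set0 -> W != S -> #|W| < rk b W) -> x0 \in S ->
  hall_set (cap_dec b y) (S :\ x0).
Proof.
move=> slack x0S; apply/hall_setP => W sW.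
have [-> | W_neq0] := eqVneq W set0; first by rewrite cards0.
have W_neqS : W != S.
  by apply: contraTneq x0S => <-; apply/negP => /(subsetP sW); rewrite !inE eqxx.
have := slack W (subset_trans sW (subsetDl S _)) W_neq0 W_neqS.
have := rk_le_cap_dec b y W; lia.
Qed.

Lemma matching_setU1 b S phi x y :
  matching (cap_dec b y) S phi -> adj x y -> 0 < b y ->
  matching b (x |: S) (fun u => if u == x then Some y else phi u).
Proof.
move=> [adjS capS] axy by_gt0; split=> [u | z].
  by case: eqP => [-> // | /eqP ux]; rewrite !inE (negbTE ux) => /adjS.
have sfib : [set u in x |: S | (if u == x then Some y else phi u) == Some z]
    \subset [set u | (u == x) && (y == z)] :|: [set u in S | phi u == Some z].
  apply/subsetP => u; rewrite !inE.
  by case: (u == x) => /= [/eqP [->] | /andP [-> ->]]; rewrite ?eqxx.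
apply: leq_trans (subset_leq_card sfib) _; rewrite cardsU.
have := capS z; rewrite /cap_dec.
have [<- | yz] := eqVneq y z.
  have -> : [set u | (u == x) && true] = [set x] by apply/setP => u; rewrite !inE andbT.
  by rewrite cards1 /=; lia.
have -> : [set u | (u == x) && false] = set0 by apply/setP => u; rewrite !inE andbF.
by rewrite cards0 subn0 /=; lia.
Qed.

Lemma hall_set_adj b S x : hall_set b S -> x \in S -> exists2 y, adj x y & 0 < b y.
Proof.
move=> /hall_setP hS xS; have := hS [set x]; rewrite sub1set xS cards1 => /(_ isT).
rewrite lt0n sum_nat_eq0 negb_forall => /existsP [y]; rewrite negb_imply -lt0n inE.
by case/andP=> /exists_inP [x' /set1P -> axy] by_gt0; exists y.
Qed.

(* Halmos-Vaughan: if some nonempty proper W0 is tight, match W0 and S :\: W0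
   separately, the latter with the slots of nbhd W0 switched off; otherwise match
   any x0 to a neighbour y and decrease the capacity of y. *)
Theorem hall b S : hall_set b S -> exists phi, matching b S phi.
Proof.
have [k] := ubnP #|S|; elim: k => // k IH in b S *; rewrite ltnS => cardS hS.
have [-> | [x0 x0S]] := set_0Vmem S; first by exists (fun=> None); exact: matching0.
have [/existsP [W0 /and4P [sW0S W0_neq0 W0_neqS tight]] | ] :=
  boolP [exists W0 : {set X}, [&& W0 \subset S, W0 != set0, W0 != S & rk b W0 <= #|W0|]].
  have W0_gt0 : 0 < #|W0| by rewrite card_gt0.
  have ltW0S : #|W0| < #|S| by rewrite proper_card // properEneq W0_neqS.
  have ltSW0 : #|S :\: W0| < #|S| by rewrite cardsDS //; lia.
  have [phi1 m1] := IH b W0 (leq_trans ltW0S cardS) (hall_setS sW0S hS).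
  have [phi2 m2] := IH _ _ (leq_trans ltSW0 cardS) (hall_set_tight hS sW0S tight).
  have <- : W0 :|: S :\: W0 = S by rewrite -{2}(setID S W0) (setIidPr sW0S).
  by eexists; exact: matching_setU m1 m2.
rewrite negb_exists => /forallP no_tight.
have slack W : W \subset S -> W != set0 -> W != S -> #|W| < rk b W.
  by move=> sWS W_neq0 W_neqS; have := no_tight W; rewrite sWS W_neq0 W_neqS ltnNge.
have [y ax0y by_gt0] := hall_set_adj hS x0S.
have ltSx0 : #|S :\ x0| < #|S| by rewrite (cardsD1 x0 S) x0S.
have [phi m] := IH _ _ (leq_trans ltSx0 cardS) (hall_set_slack y slack x0S).
by rewrite -(setD1K x0S); eexists; exact: matching_setU1 m ax0y by_gt0.
Qed.

Lemma rk_setU_le_cardI b M V W :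
  hall_set b M -> rk b V <= #|V :&: M| -> rk b W <= #|W :&: M| ->
  rk b (V :|: W) <= #|(V :|: W) :&: M|.
Proof.
move=> /hall_setP hM rkV rkW.
have := rk_setU_setI b V W; have := rkS b (subsetIl (V :&: W) M).
have := hM _ (subsetIr (V :&: W) M); have := cardsUI (V :&: M) (W :&: M).
rewrite -setIUl (setIACA V M W M) setIid; lia.
Qed.

Definition deficient_hull b M : {set X} :=
  \bigcup_(V : {set X} | rk b V <= #|V :&: M|) V.

Lemma rk_deficient_hull b M :
  hall_set b M -> rk b (deficient_hull b M) <= #|deficient_hull b M :&: M|.
Proof.
move=> hM; rewrite /deficient_hull.
apply: (big_ind (fun U => rk b U <= #|U :&: M|)) => //; first by rewrite rk0.
by move=> V W; apply: rk_setU_le_cardI.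
Qed.

Lemma mem_deficient_hull b M x :
  hall_set b M -> ~~ hall_set b (x |: M) -> x \in deficient_hull b M.
Proof.
move=> /hall_setP hM; rewrite negb_forall => /existsP [W].
rewrite negb_imply -ltnNge => /andP [sW rkW].
have sW' : W \subset x |: (W :&: M).
  apply/subsetP => u uW; move: (subsetP sW u uW); rewrite !inE uW.
  by case/orP=> ->; rewrite ?orbT.
have rkWM : rk b W <= #|W :&: M|.
  by have := subset_leq_card sW'; rewrite cardsU1; case: (x \notin _) => /=; lia.
have xW : x \in W.
  apply: contraTT rkW => xNW; rewrite -leqNgt; apply: hM; apply/subsetP => u uW.
  by move: (subsetP sW u uW); rewrite !inE; case: eqP uW xNW => [-> -> | ].
by apply/bigcupP; exists W.
Qed.

Section Greedy.
Variables (R : realFieldType) (b : Y -> nat) (f : X -> R).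
Local Open Scope ring_scope.
Hypotheses (f_le1 : forall x, f x <= 1)
  (f_le_rk : forall W, \sum_(x in W) f x <= (rk b W)%:R).

(* Every x in A :\: M that cannot be added lies in the deficient hull U, hence
   f(A :&: U) <= rk U <= #|M :&: U| while f(A :\: U) <= #|A :\: U| <= #|M :\: U|. *)
Lemma sum_le_card_maximal A M :
  hall_set b M -> M \subset A -> (forall x, x \in A :\: M -> ~~ hall_set b (x |: M)) ->
  \sum_(x in A) f x <= #|M|%:R.
Proof.
move=> hM sMA maxM; set U := deficient_hull b M.
have sAMU : A :\: M \subset U.
  by apply/subsetP => x /maxM; apply: mem_deficient_hull.
have sAUM : A :\: U \subset M :\: U.
  apply/subsetP => x; rewrite !inE => /andP [xNU xA]; rewrite xNU /=.
  by apply: contraNT xNU => xNM; apply: (subsetP sAMU); rewrite inE xNM.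
have sumAU : \sum_(x in A :&: U) f x <= #|M :&: U|%:R.
  apply: le_trans (f_le_rk _) _; rewrite ler_nat (setIC M).
  exact: leq_trans (rkS b (subsetIr A U)) (rk_deficient_hull hM).
have sumADU : \sum_(x in A :\: U) f x <= #|M :\: U|%:R.
  apply: le_trans (_ : _ <= \sum_(x in A :\: U) 1) _; first exact: ler_sum.
  by rewrite sumr_const ler_nat subset_leq_card.
by rewrite (big_setID U) -(cardsID U M) natrD lerD.
Qed.

Lemma hall_set_augment A M :
  hall_set b M -> M \subset A -> #|M|%:R < \sum_(x in A) f x ->
  exists2 x, x \in A :\: M & hall_set b (x |: M).
Proof.
move=> hM sMA ltMA.
have [/exists_inP [x xAM hxM] | noaug] :=
  boolP [exists x in A :\: M, hall_set b (x |: M)]; first by exists x.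
suff : \sum_(x in A) f x <= #|M|%:R by rewrite leNgt ltMA.
apply: sum_le_card_maximal => // x xAM.
by apply: contraNN noaug => hxM; apply/exists_inP; exists x.
Qed.

(* Split c = c' + c xm with xm a cheapest location: the constant part is paid for
   by #|M| >= f(A), and c' >= 0 is handled on A :\ xm by induction, followed by
   one augmentation if #|M| is too small. *)
Lemma hall_set_greedy A (c : X -> R) : {in A, forall x, 0 <= c x} ->
  exists M, [/\ hall_set b M, M \subset A,
    \sum_(x in A) c x * f x <= \sum_(x in M) c x & \sum_(x in A) f x <= #|M|%:R].
Proof.
have [k] := ubnP #|A|; elim: k => // k IH in A c *; rewrite ltnS => cardA c_ge0.
have [-> | [x0 x0A]] := set_0Vmem A.
  by exists set0; rewrite hall_set0 sub0set !big_set0 cards0.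
have [xm xmA cmin] : exists2 xm, xm \in A & {in A, forall x, c xm <= c x}.
  by case: (arg_minP c x0A) => xm xmA cmin; exists xm.
pose c' x := c x - c xm.
have c'_ge0 : {in A, forall x, 0 <= c' x} by move=> x xA; rewrite subr_ge0 cmin.
have sum_cf : \sum_(x in A) c x * f x =
              \sum_(x in A :\ xm) c' x * f x + c xm * \sum_(x in A) f x.
  rewrite mulr_sumr (big_setD1 xm xmA) /= [X in _ = _ + X](big_setD1 xm xmA) /=.
  rewrite [RHS]addrCA -big_split /=; congr (_ + _).
  by apply: eq_bigr => x _; rewrite mulrBl subrK.
have sum_c M : \sum_(x in M) c x = \sum_(x in M) c' x + c xm * #|M|%:R.
  by rewrite mulr_natr -sumr_const -big_split /=; apply: eq_bigr => x _; rewrite subrK.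
have cm_ge0 : 0 <= c xm by apply: c_ge0.
suff [M [hM sMA sum_c'f sum_f]] : exists M, [/\ hall_set b M, M \subset A,
    \sum_(x in A :\ xm) c' x * f x <= \sum_(x in M) c' x & \sum_(x in A) f x <= #|M|%:R].
  by exists M; split=> //; rewrite sum_cf sum_c lerD // ler_wpM2l.
have ltAxm : (#|A :\ xm| < #|A|)%N by rewrite (cardsD1 xm A) xmA.
have c'_ge0' : {in A :\ xm, forall x, 0 <= c' x} by move=> x /setD1P [_ /c'_ge0].
have [M [hM sMA sum_c'f sum_f]] := IH _ _ (leq_trans ltAxm cardA) c'_ge0'.
have sMA' : M \subset A := subset_trans sMA (subsetDl A _).
have [le_fM | lt_Mf] := leP (\sum_(x in A) f x) #|M|%:R; first by exists M.
have [x /setDP [xA xNM] hxM] := hall_set_augment hM sMA' lt_Mf.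
exists (x |: M); split=> //; first by rewrite subUset sub1set xA.
  by rewrite big_setU1 //= ler_wpDl ?c'_ge0.
by rewrite cardsU1 xNM natrD (big_setD1 xm xmA) /= lerD.
Qed.

End Greedy.

End BMatching.

Local Open Scope ring_scope.

Lemma sum_indicator (R : pzSemiRingType) (T : finType) (A S : {set T}) :
  \sum_(x in A) ((x \in S)%:R : R) = #|A :&: S|%:R.
Proof.
rewrite (big_setID S) /= [X in _ + X]big1 ?addr0 => [|x /setDP [_ /negbTE ->] //].
by rewrite -sumr_const; apply: eq_bigr => x /setIP [_ ->].
Qed.

Section SearchGame.
Variables (R : realType) (Omega : finType) (n : nat)
  (P : 'I_n -> {set {set Omega}}) (K : 'I_n -> nat).
Hypothesis P_partition : forall i, partition (P i) [set: Omega].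

Definition in_slot (w : Omega) (slot : 'I_n * {set Omega}) : bool :=
  slot.2 == cell P slot.1 w.

Definition slot_cap (slot : 'I_n * {set Omega}) : nat := K slot.1.

Notation rk_slots := (rk in_slot slot_cap).
Notation slot_matching := (matching in_slot slot_cap).

Lemma cell_mem i w : cell P i w \in P i.
Proof. by apply: pblock_mem; case/and3P: (P_partition i) => /eqP ->. Qed.

Lemma mem_cell i w : w \in cell P i w.
Proof. by rewrite mem_pblock; case/and3P: (P_partition i) => /eqP ->. Qed.

Lemma cell_eq i pi w : pi \in P i -> w \in pi -> cell P i w = pi.
Proof. by move=> piP wpi; apply: def_pblock => //; case/and3P: (P_partition i). Qed.

Lemma mem_nbhd_slots W i pi :
  ((i, pi) \in nbhd in_slot W) = (pi \in P i) && (pi :&: W != set0).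
Proof.
rewrite inE; apply/exists_inP/andP => [[w wW /eqP /= ->] | [piP /set0Pn [w]]].
  by rewrite cell_mem; split=> //; apply/set0Pn; exists w; rewrite inE mem_cell.
by rewrite inE => /andP [wpi wW]; exists w; rewrite // /in_slot (cell_eq piP wpi).
Qed.

Lemma rk_slotsE W :
  rk_slots W = (\sum_(i < n) K i * #|[set pi in P i | pi :&: W != set0]|)%N.
Proof.
rewrite /rk big_mkcond /=.
transitivity (\sum_i \sum_pi (if (i, pi) \in nbhd in_slot W then K i else 0))%N.
  by rewrite pair_bigA; apply: eq_bigr => -[i pi].
apply: eq_bigr => i _.
rewrite -sum1_card big_distrr /= muln1 [RHS]big_mkcond /=; apply: eq_bigr => pi _.
by rewrite mem_nbhd_slots inE.
Qed.

Lemma natr_rk_slots (W : {set Omega}) :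
  (rk_slots W)%:R = \sum_(i < n) (K i)%:R * #|[set pi in P i | pi :&: W != set0]|%:R :> R.
Proof. by rewrite rk_slotsE natr_sum; under eq_bigr do rewrite natrM. Qed.

Lemma compatible_le_rk (f : Omega -> R) :
  compatible P K f -> forall W : {set Omega}, \sum_(w in W) f w <= (rk_slots W)%:R.
Proof. by case=> _ f_le W; rewrite natr_rk_slots. Qed.

Definition covered (s : profile Omega n) : {set Omega} :=
  [set w | (1 <= m_s P s w)%N].

Definition coverage (s : profile Omega n) (w : Omega) : R := (w \in covered s)%:R.

Lemma profile_of_matching (M : {set Omega}) phi :
  slot_matching M phi -> exists s, is_profile P K s /\ M \subset covered s.
Proof.
case=> phiM capM.
exists [ffun i => [ffun pi => [set w in M | phi w == Some (i, pi)]]]; split.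
  apply/forallP => i; apply/forall_inP => pi piP; rewrite !ffunE.
  rewrite (capM (i, pi)) andbT; apply/subsetP => w; rewrite inE => /andP [wM /eqP phiw].
  by have := phiM w wM; rewrite phiw /in_slot /= => /eqP ->; apply: mem_cell.
apply/subsetP => w wM; have := phiM w wM; rewrite inE.
case phiw: (phi w) => [[i pi] |] //= /eqP epi.
by rewrite /m_s (bigD1 i) //= !ffunE inE wM phiw -epi eqxx.
Qed.

Lemma matching_of_profile s :
  is_profile P K s -> exists phi, slot_matching (covered s) phi.
Proof.
move=> /forallP sK.
pose phi w := omap (fun i => (i, cell P i w)) [pick i | w \in s i (cell P i w)].
exists phi; split=> [w | [i pi]].
  rewrite inE /m_s lt0n sum_nat_eq0 negb_forall => /existsP [i].
  by rewrite /phi; case: pickP => [j _ _ | /(_ i) ->]; rewrite /= /in_slot ?eqxx.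
set F := [set w in covered s | phi w == Some (i, pi)].
have F_cell w : w \in F -> (w \in s i pi) && (pi == cell P i w).
  by rewrite !inE /phi; case: pickP => [j sjw | _] /andP [_] //= /eqP [<- <-]; rewrite sjw eqxx.
have [-> | [w0 /F_cell /andP [_ /eqP pi_cell]]] := set_0Vmem F; first by rewrite cards0.
have piP : pi \in P i by rewrite pi_cell cell_mem.
have /forall_inP /(_ pi piP) /andP [_ cardK] := sK i.
by apply: leq_trans cardK; apply/subset_leq_card/subsetP => w /F_cell /andP [].
Qed.

Lemma coverage_compatible s : is_profile P K s -> compatible P K (coverage s).
Proof.
move=> sK; split=> [w | W]; first by rewrite /coverage; case: (_ \in _); rewrite ?lexx ?ler01.
have [phi /matching_hall /hall_setP hall_cov] := matching_of_profile sK.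
rewrite sum_indicator -natr_rk_slots ler_nat.
exact: leq_trans (hall_cov _ (subsetIr W _)) (rkS _ _ (subsetIl _ _)).
Qed.

Lemma value_coverage (mu vs : Omega -> R) s : value mu vs (coverage s) = U P mu vs s.
Proof. by apply: eq_bigr => w _; rewrite /coverage inE [RHS]mulrC mulrA. Qed.

Definition alloc_of_profile (s : profile Omega n)
    (i : 'I_n) (pi : {set Omega}) (w : Omega) : R :=
  (w \in s i pi)%:R.

Lemma alloc_of_profile_frac s : is_profile P K s -> frac_alloc P K (alloc_of_profile s).
Proof.
move=> /forallP sK i pi piP; split=> [w _ | ]; first exact: ler0n.
have /forall_inP /(_ pi piP) /andP [sub cardK] := sK i.
by rewrite sum_indicator ler_nat (setIidPr sub).
Qed.

Lemma f_alpha_alloc_of_profile s : f_alpha P (alloc_of_profile s) =1 coverage s.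
Proof.
move=> w; rewrite /f_alpha /coverage /alloc_of_profile -natr_sum inE -/(m_s P s w).
case: (posnP (m_s P s w)) => [-> | m_gt0]; first by rewrite min_r.
by rewrite min_l ?ler1n.
Qed.

Section FracAlloc.
Variable alpha : 'I_n -> {set Omega} -> Omega -> R.
Hypothesis alpha_ok : frac_alloc P K alpha.

Lemma frac_alloc_ge0 i w : 0 <= alpha i (cell P i w) w.
Proof. by have [ge0 _] := alpha_ok (cell_mem i w); apply/ge0/mem_cell. Qed.

Lemma frac_alloc_sum_le i (W : {set Omega}) :
  \sum_(w in W) alpha i (cell P i w) w <=
  (K i)%:R * #|[set pi in P i | pi :&: W != set0]|%:R.
Proof.
rewrite (partition_big (cell P i) (fun pi => pi \in [set pi in P i | pi :&: W != set0]))
  => [|w wW]; last first.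
  by rewrite inE cell_mem; apply/set0Pn; exists w; rewrite inE mem_cell.
rewrite mulr_natr -sumr_const /=; apply: ler_sum => pi; rewrite inE => /andP [piP _].
have [ge0 sum_le] := alpha_ok piP; apply: le_trans sum_le.
rewrite [leRHS]big_mkcond [leLHS]big_mkcond /=; apply: ler_sum => w _.
case: ifP => [/andP [_ /eqP <-] | _]; first by rewrite mem_cell.
by case: ifP => // /ge0.
Qed.

Lemma frac_alloc_compatible : compatible P K (f_alpha P alpha).
Proof.
have sum_ge0 w : 0 <= \sum_(i < n) alpha i (cell P i w) w.
  by apply: sumr_ge0 => i _; apply: frac_alloc_ge0.
split=> [w | W]; first by rewrite /f_alpha le_min ge_min lexx ler01 sum_ge0.
apply: le_trans (_ : _ <= \sum_(w in W) \sum_(i < n) alpha i (cell P i w) w) _.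
  by apply: ler_sum => w _; rewrite /f_alpha ge_min lexx orbT.
by rewrite exchange_big; apply: ler_sum => i _; apply: frac_alloc_sum_le.
Qed.

End FracAlloc.

Section Values.
Variables (mu vs : Omega -> R).
Hypotheses (mu_ge0 : forall w, 0 <= mu w) (vs_ge0 : forall w, 0 <= vs w).

Definition empty_profile : profile Omega n := [ffun=> [ffun=> set0]].

Lemma empty_profileP : is_profile P K empty_profile.
Proof. by apply/forallP => i; apply/forall_inP => pi _; rewrite !ffunE sub0set cards0. Qed.

Lemma U_empty_profile : U P mu vs empty_profile = 0.
Proof.
by apply: big1 => w _; rewrite /m_s big1 ?mulr0 // => i _; rewrite !ffunE inE.
Qed.

Lemma U_opt_attained : exists2 s, is_profile P K s & U P mu vs s = U_opt P K mu vs.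
Proof.
apply: (big_ind (fun u => exists2 s, is_profile P K s & U P mu vs s = u)).
- by exists empty_profile; rewrite ?empty_profileP ?U_empty_profile.
- move=> _ _ [su su_ok <-] [sv sv_ok <-].
  by case: (leP (U P mu vs su) (U P mu vs sv)); [exists sv | exists su].
- by move=> s sK; exists s.
Qed.

Lemma U_le_U_opt s : is_profile P K s -> U P mu vs s <= U_opt P K mu vs.
Proof. exact: le_bigmax_cond. Qed.

Lemma sum_covered_le_U s (M : {set Omega}) :
  M \subset covered s -> \sum_(w in M) mu w * vs w <= U P mu vs s.
Proof.
move=> sMcov; rewrite big_mkcond; apply: ler_sum => w _.
have summand_ge0 : 0 <= mu w * vs w * ((1 <= m_s P s w)%N)%:R by rewrite !mulr_ge0.
by case: ifP => // /(subsetP sMcov); rewrite inE => ->; rewrite mulr1.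
Qed.

Lemma compatible_value_le_U_opt f : compatible P K f -> value mu vs f <= U_opt P K mu vs.
Proof.
move=> f_compat; have [f_mixed _] := f_compat.
have [M [hM _ val_le _]] := hall_set_greedy (fun w => proj2 (andP (f_mixed w)))
  (compatible_le_rk f_compat) (A := [set: Omega]) (c := fun w => mu w * vs w)
  (fun w _ => mulr_ge0 (mu_ge0 w) (vs_ge0 w)).
have [phi /profile_of_matching [s [sK sMcov]]] := hall hM.
apply: le_trans (U_le_U_opt sK); apply: le_trans (sum_covered_le_U sMcov).
apply: le_trans val_le; rewrite /value.
by under [leRHS]eq_big => [w | w _] do [rewrite inE | rewrite mulrC mulrA].
Qed.

End Values.

End SearchGame.

Theorem corollary3 (R : realType) (Omega : finType) (n : nat)
  (P : 'I_n -> {set {set Omega}}) (K : 'I_n -> nat)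
  (mu : Omega -> R) (vs : Omega -> R) :
  (forall i, partition (P i) [set: Omega]) ->
  (forall w, 0 <= mu w) -> \sum_(w : Omega) mu w = 1 ->
  (forall w, 0 <= vs w) ->
  (* U_opt is the maximum over compatible mixed outcomes *)
  ((exists f, compatible P K f /\ value mu vs f = U_opt P K mu vs) /\
   (forall f, compatible P K f -> value mu vs f <= U_opt P K mu vs)) /\
  (* U_opt is the maximum over outcomes generated by fractional allocations *)
  ((exists alpha, frac_alloc P K alpha /\
                  value mu vs (f_alpha P alpha) = U_opt P K mu vs) /\
   (forall alpha, frac_alloc P K alpha ->
                  value mu vs (f_alpha P alpha) <= U_opt P K mu vs)).
Proof.
move=> P_partition mu_ge0 _ vs_ge0.
have le_U_opt := compatible_value_le_U_opt P_partition mu_ge0 vs_ge0.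
have [s sK U_s] := U_opt_attained P K mu vs.
split; split.
- exists (coverage R P s); split; first exact: coverage_compatible.
  by rewrite value_coverage.
- by move=> f; apply: le_U_opt.
- exists (alloc_of_profile R s); split; first exact: alloc_of_profile_frac.
  by rewrite -U_s -value_coverage; apply: eq_bigr => w _; rewrite f_alpha_alloc_of_profile.
- by move=> alpha alpha_ok; apply/le_U_opt/frac_alloc_compatible.
Qed.
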